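(* Let $n,m,n_f,\ell\in\mathbb{N}$, let $w>1$ be a number representable with $n$ bits of which the first $m$ are its integer part, and let $f\in[0,1]$ be given with $n_f$ bits after the binary point. Then the value $\hat{z}$ returned by Algorithm FractionalPower$(w,f,n,m,n_f,\ell)$ (described in the context), which performs arithmetic with $b=\max\{n,n_f,\lceil 5(\ell+2m+\ln n_f)\rceil,40\}$ bits after the binary point, satisfies $$|\hat{z}-w^f|\leq\left(\frac12\right)^{\ell-1}.$$
   Context: Fixed precision representation: a number $w\ge 0$ ''given by $n$ bits of which the first $m$ correspond to its integer part'' means $w=\sum_{j=m-n}^{m-1} w^{(j)}2^j$ with $w^{(j)}\in\{0,1\}$. For $x\geq 0$, ''truncating $x$ to $b$ bits after the binary point'' means replacing $x$ by $\lfloor 2^b x\rfloor/2^b$. All arithmetic inside a step is performed exactly; only the stated truncations introduce error. Algorithm SQRT$(w,n,m,b)$ (input $w\geq 1$): if $w=1$, return $1$. Otherwise: let $p\in\mathbb{N}$ with $2^{p}>w\geq 2^{p-1}$ and set $\hat{x}_0=2^{-p}$; let $s=\lceil\log_2 b\rceil$; for $i=1,\dots,s$ compute exactly $x_i=-w\hat{x}_{i-1}^2+2\hat{x}_{i-1}$ and let $\hat{x}_i$ be $x_i$ truncated to $b$ bits. Then let $q\in\mathbb{N}$ with $2^{1-q}>\hat{x}_s\geq 2^{-q}$ and set $\hat{y}_0=2^{\lfloor (q-1)/2\rfloor}$; for $j=1,\dots,s$ compute exactly $y_j=\frac12(3\hat{y}_{j-1}-\hat{x}_s\hat{y}_{j-1}^3)$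 and let $\hat{y}_j$ be $y_j$ truncated to $b$ bits. Return $\hat{y}_s$. Algorithm PowerOf2Roots$(w,k,n,m,b)$: set $\hat{z}_1=$ SQRT$(w,n,m,b)$; for $i=2,\dots,k$ set $\hat{z}_i=$ SQRT$(\hat{z}_{i-1},m+b,m,b)$. Return $\hat{z}_1,\dots,\hat{z}_k$. Algorithm FractionalPower$(w,f,n,m,n_f,\ell)$ (input $w\geq1$, $f=\sum_{i=1}^{n_f}f_i2^{-i}\in[0,1]$ or $f=1$, with bits $f_i\in\{0,1\}$): set $b=\max\{n,n_f,\lceil 5(\ell+2m+\ln n_f)\rceil,40\}$. If $f=1$ return $w$; if $f=0$ return $1$. Let $\hat{w}_1,\dots,\hat{w}_{n_f}$ be the outputs of PowerOf2Roots$(w,n_f,n,m,b)$. Set $\hat{z}=1$; for $i=1,\dots,n_f$, if $f_i=1$ replace $\hat{z}$ by $\hat{z}\hat{w}_i$ truncated to $b$ bits after the binary point. Return $\hat{z}$. *)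

From Stdlib Require Import Reals Lra Lia ZArith.
Open Scope R_scope.

Definition trunc (b : nat) (x : R) : R := IZR (Int_part (2 ^ b * x)) / 2 ^ b.

Definition Zceil (x : R) : Z := (- Int_part (- x))%Z.

Definition ilog2 (x : R) : Z := Int_part (ln x / ln 2).

Fixpoint bitsum (bits : nat -> bool) (lo : Z) (len : nat) : R :=
  match len with
  | O => 0
  | S k => bitsum bits lo k + (if bits k then powerRZ 2 (lo + Z.of_nat k) else 0)
  end.

Fixpoint fracsum (fbits : nat -> bool) (nf : nat) : R :=
  match nf with
  | O => 0
  | S k => fracsum fbits k + (if fbits (S k) then powerRZ 2 (- Z.of_nat (S k)) else 0)
  end.

(* Newton iteration for 1/w: hat x_i = trunc_b(-w hat x_{i-1}^2 + 2 hat x_{i-1}) *)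
Fixpoint xiter (w x0 : R) (b k : nat) : R :=
  match k with
  | O => x0
  | S k' => let x := xiter w x0 b k' in trunc b (- w * x ^ 2 + 2 * x)
  end.

(* Newton iteration for 1/sqrt(xs): hat y_j = trunc_b((3 hat y_{j-1} - xs hat y_{j-1}^3)/2) *)
Fixpoint yiter (xs y0 : R) (b k : nat) : R :=
  match k with
  | O => y0
  | S k' => let y := yiter xs y0 b k' in trunc b ((3 * y - xs * y ^ 3) / 2)
  end.

(* Algorithm SQRT(w, n, m, b)  (n, m only describe the input format) *)
Definition SQRT (w : R) (n m b : nat) : R :=
  if Req_EM_T w 1 then 1 else
  let p := (ilog2 w + 1)%Z in
  let x0 := powerRZ 2 (- p) in
  let s := Nat.log2_up b in
  let xs := xiter w x0 b s in
  let q := (- ilog2 xs)%Z in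
  let y0 := powerRZ 2 ((q - 1) / 2)%Z in
  yiter xs y0 b s.

Fixpoint PowerOf2Root (w : R) (i n m b : nat) : R :=
  match i with
  | O => w (* unused *)
  | S O => SQRT w n m b
  | S i' => SQRT (PowerOf2Root w i' n m b) (m + b) m b
  end.

Fixpoint prodloop (w : R) (fbits : nat -> bool) (k n m b : nat) : R :=
  match k with
  | O => 1
  | S k' => let z := prodloop w fbits k' n m b in
            if fbits (S k') then trunc b (z * PowerOf2Root w (S k') n m b) else z
  end.

Definition FP_b (n m nf l : nat) : nat :=
  Nat.max n (Nat.max nf
    (Nat.max (Z.to_nat (Zceil (5 * (INR l + 2 * INR m + ln (INR nf))))) 40)).

(* Algorithm FractionalPower(w, f, n, m, n_f, l); fbits i is the i-th bit of f *)
Definition FractionalPower (w f : R) (fbits : nat -> bool) (n m nf l : nat) : R :=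
  let b := FP_b n m nf l in
  if Req_EM_T f 1 then w else
  if Req_EM_T f 0 then 1 else
  prodloop w fbits nf n m b.

(** Each call of SQRT runs Newton's iteration for [1/x] and then Newton's
    iteration for [1/sqrt] of the result; the power-of-two seeds put the
    residuals [1 - x x_i] and [1 - x_s y_j^2] in [[0, 1/2]] and [[0, 3/4]].
    With truncation to [b] bits a residual is squared up to an error
    [O(2^-b)] at each step, so after [ceil (log2 b)] steps both are
    [O(2^(-b/2))] and SQRT has relative error [3 * 2^(-b/2)] on [[1/2, 2^m]].
    Composing square roots keeps the relative error of the iterated roots
    [w^(2^-i)] below [9 * 2^(-b/2)], and each truncated multiplication of the
    product loop adds twice that, so the output is [w^f (1 +- 18 nf 2^(-b/2))].
    The choice of [b] makes [100 * 2^m * nf * 2^l * 2^(-b/2) <= 1], and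
    [w^f <= w < 2^m]. *)

From Stdlib Require Import Reals ZArith Lra Lia Psatz.
Open Scope R_scope.

Lemma trunc_bounds b x : x - (/2)^b < trunc b x <= x.
Proof.
  unfold trunc. destruct (base_Int_part (2^b * x)) as [Hlo Hhi].
  assert (Hp : 0 < 2^b) by (apply pow_lt; lra).
  rewrite pow_inv. split.
  - apply Rmult_lt_reg_r with (2^b); [exact Hp|].
    unfold Rdiv. rewrite Rmult_assoc, Rinv_l by lra.
    replace ((x - / 2^b) * 2^b) with (2^b * x - 1) by (field; lra). lra.
  - apply Rmult_le_reg_r with (2^b); [exact Hp|].
    unfold Rdiv. rewrite Rmult_assoc, Rinv_l by lra. lra.
Qed.

Lemma half_pow_le k n : (k <= n)%nat -> (/2)^n <= (/2)^k.
Proof.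
  intros Hkn. rewrite !pow_inv.
  apply Rinv_le_contravar; [apply pow_lt; lra|]. apply Rle_pow; [lra | exact Hkn].
Qed.

Lemma two_le_pow2 i : (1 <= i)%nat -> 2 <= 2 ^ i.
Proof. intros Hi. replace 2 with (2 ^ 1) at 1 by ring. apply Rle_pow; [lra | exact Hi]. Qed.

Lemma powerRZ2_le a c : (a <= c)%Z -> powerRZ 2 a <= powerRZ 2 c.
Proof.
  intros Hac. rewrite !powerRZ_Rpower by lra.
  apply Rle_Rpower; [lra | apply IZR_le, Hac].
Qed.

Lemma ilog2_spec x : 0 < x -> powerRZ 2 (ilog2 x) <= x < powerRZ 2 (ilog2 x + 1).
Proof.
  intros Hx. pose proof (Rpower_Rlog 2 x ltac:(lra) ltac:(lra) Hx) as Hlog.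
  unfold Rlog in Hlog. unfold ilog2.
  destruct (base_Int_part (ln x / ln 2)) as [Hlo Hhi].
  rewrite !powerRZ_Rpower, plus_IZR by lra. rewrite <- Hlog at 2 3. split.
  - apply Rle_Rpower; lra.
  - apply Rpower_lt; lra.
Qed.

Lemma reciprocal_seed x : 0 < x -> /2 <= x * powerRZ 2 (- (ilog2 x + 1)) <= 1.
Proof.
  intros Hx. destruct (ilog2_spec x Hx) as [Hlo Hhi].
  set (k := ilog2 x) in *.
  assert (Hpos : 0 < powerRZ 2 (- (k + 1))) by (apply powerRZ_lt; lra).
  assert (Hhalf : powerRZ 2 k * powerRZ 2 (- (k + 1)) = /2).
  { rewrite <- powerRZ_add by lra. replace (k + - (k + 1))%Z with (-1)%Z by lia.
    simpl. field. }
  assert (Hone : powerRZ 2 (k + 1) * powerRZ 2 (- (k + 1)) = 1).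
  { rewrite <- powerRZ_add by lra. replace (k + 1 + - (k + 1))%Z with 0%Z by lia.
    reflexivity. }
  split; nra.
Qed.

Lemma inv_sqrt_seed x : 0 < x -> /4 <= x * powerRZ 2 ((- ilog2 x - 1) / 2) ^ 2 <= 1.
Proof.
  intros Hx. destruct (ilog2_spec x Hx) as [Hlo Hhi].
  set (k := ilog2 x) in *. set (j := ((- k - 1) / 2)%Z).
  assert (Hj : (- k - 2 <= 2 * j <= - k - 1)%Z).
  { pose proof (Z.div_mod (- k - 1) 2 ltac:(lia)).
    pose proof (Z.mod_pos_bound (- k - 1) 2 ltac:(lia)). lia. }
  assert (Hsq : powerRZ 2 j ^ 2 = powerRZ 2 (2 * j)).
  { replace (2 * j)%Z with (j + j)%Z by lia. rewrite powerRZ_add by lra. ring. }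
  rewrite Hsq.
  assert (Hpos : 0 < powerRZ 2 (2 * j)) by (apply powerRZ_lt; lra).
  assert (Hlow : /4 <= powerRZ 2 k * powerRZ 2 (2 * j)).
  { rewrite <- powerRZ_add by lra.
    replace (/4) with (powerRZ 2 (-2)) by (simpl; field). apply powerRZ2_le. lia. }
  assert (Hup : powerRZ 2 (k + 1) * powerRZ 2 (2 * j) <= 1).
  { rewrite <- powerRZ_add by lra.
    replace 1 with (powerRZ 2 0) by reflexivity. apply powerRZ2_le. lia. }
  split; nra.
Qed.

Lemma pow_le_one a k : 0 <= a <= 1 -> a ^ k <= 1.
Proof.
  intros Ha. induction k as [|k IH]; simpl; [lra|]. pose proof (pow_le a k). nra.
Qed.

Lemma squaring_error_bound (u : nat -> R) a th :
  0 <= a <= /4 -> 0 <= th <= /100 ->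
  (forall j, 0 <= u j) -> (forall j, u (S j) <= u j ^ 2 + th) ->
  u 0%nat <= a + 3 * th ->
  forall j, u j <= a ^ (2 ^ j) + 3 * th.
Proof.
  intros Ha Hth Hpos Hstep H0 j. induction j as [|j IH]; [simpl; lra|].
  set (A := a ^ (2 ^ j)) in *.
  assert (HA : 0 <= A <= a).
  { split; [apply pow_le; lra|].
    assert (Hexp : (2 ^ j = S (2 ^ j - 1))%nat)
      by (pose proof (Nat.pow_nonzero 2 j ltac:(lia)); lia).
    unfold A. rewrite Hexp. simpl.
    assert (a ^ (2 ^ j - 1) <= 1) by (apply pow_le_one; lra).
    pose proof (pow_le a (2 ^ j - 1)). nra. }
  rewrite Nat.pow_succ_r', Nat.mul_comm, pow_mult. fold A.
  pose proof (Hstep j). pose proof (Hpos j).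
  assert (u j ^ 2 <= (A + 3 * th) ^ 2) by (apply pow_incr; lra).
  nra.
Qed.

Lemma quarter_pow_pow2 j : (/4) ^ (2 ^ j) = (/2) ^ (2 ^ S j).
Proof.
  replace (/4) with ((/2) ^ 2) by (simpl; field).
  rewrite <- pow_mult, Nat.pow_succ_r', Nat.mul_comm. reflexivity.
Qed.

Lemma reciprocal_newton_step w x b : 0 < w ->
  (1 - w * x) ^ 2 <= 1 - w * trunc b (- w * x ^ 2 + 2 * x) <= (1 - w * x) ^ 2 + w * (/2)^b.
Proof.
  intros Hw. destruct (trunc_bounds b (- w * x ^ 2 + 2 * x)) as [Hlo Hhi].
  set (t := trunc b _) in *.
  assert (Hsq : 1 - w * (- w * x ^ 2 + 2 * x) = (1 - w * x) ^ 2) by ring.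
  assert (w * t <= w * (- w * x ^ 2 + 2 * x)) by (apply Rmult_le_compat_l; lra).
  assert (w * (- w * x ^ 2 + 2 * x - (/2)^b) < w * t) by (apply Rmult_lt_compat_l; lra).
  split; nra.
Qed.

Lemma reciprocal_newton_error w x0 b s M :
  0 < w <= M -> M * (/2)^b <= /100 -> /2 <= w * x0 <= 1 ->
  (1 <= s)%nat -> (b <= 2 ^ s)%nat ->
  0 <= 1 - w * xiter w x0 b s <= (/2)^b + 3 * (M * (/2)^b).
Proof.
  intros Hw HM Hx0 Hs Hb.
  set (E := (/2)^b) in *.
  assert (HE : 0 < E) by (apply pow_lt; lra).
  set (e i := 1 - w * xiter w x0 b i).
  assert (Hstep : forall i, e i ^ 2 <= e (S i) <= e i ^ 2 + M * E).
  { intros i. pose proof (reciprocal_newton_step w (xiter w x0 b i) b ltac:(lra)) as Hrec.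
    assert (w * E <= M * E) by nra. unfold e. cbn [xiter]. fold E in Hrec. lra. }
  assert (Hpos : forall i, 0 <= e i).
  { intros [|i]; [unfold e; simpl; lra|].
    pose proof (Hstep i). pose proof (pow2_ge_0 (e i)). lra. }
  assert (He1 : e 1%nat <= /4 + 3 * (M * E)).
  { pose proof (Hstep 0%nat). assert (e 0%nat <= /2) by (unfold e; simpl; lra).
    pose proof (Hpos 0%nat). nra. }
  pose proof (squaring_error_bound (fun j => e (S j)) (/4) (M * E) ltac:(lra) ltac:(nra)
    (fun j => Hpos (S j)) (fun j => proj2 (Hstep (S j))) He1 (s - 1)) as Hd.
  cbv beta in Hd. rewrite quarter_pow_pow2 in Hd. replace (S (s - 1)) with s in Hd by lia.
  pose proof (half_pow_le b (2 ^ s) Hb) as Hsmall. fold E in Hsmall.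
  split; [exact (Hpos s) | unfold e in Hd; lra].
Qed.

Lemma inv_sqrt_newton_step x y b :
  0 < x <= 2 -> 0 < y -> (/2)^b <= /1000 -> 0 <= 1 - x * y ^ 2 <= 3/4 ->
  let t := trunc b ((3 * y - x * y ^ 3) / 2) in
  let d := 1 - x * y ^ 2 in
  0 < t /\ 0 <= 1 - x * t ^ 2 <= 3/4 * d ^ 2 + d ^ 3 / 4 + 3 * (/2)^b.
Proof.
  intros Hx Hy HE Hd t d.
  set (E := (/2)^b) in *.
  assert (HE0 : 0 < E) by (apply pow_lt; lra).
  set (y' := (3 * y - x * y ^ 3) / 2) in *.
  destruct (trunc_bounds b y') as [Hlo Hhi]. fold t E in Hlo, Hhi.
  assert (Hy' : y' = y * (1 + d / 2)) by (unfold y', d; field).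
  assert (Hexact : 1 - x * y' ^ 2 = 3/4 * d ^ 2 + d ^ 3 / 4) by (rewrite Hy'; unfold d; field).
  assert (Hy2 : y ^ 2 >= /8) by (assert (x * y ^ 2 >= /4) by lra; nra).
  fold d in Hd.
  assert (Hy3 : y >= /3) by nra.
  assert (Hyy : y' >= y) by (rewrite Hy'; nra).
  assert (Hpos : 0 <= 3/4 * d ^ 2 + d ^ 3 / 4) by nra.
  assert (Hxy' : x * y' <= 3/2) by nra.
  assert (t ^ 2 <= y' ^ 2) by nra.
  assert (t ^ 2 >= y' ^ 2 - 2 * y' * E) by nra.
  split; [lra|]. split.
  - assert (x * t ^ 2 <= x * y' ^ 2) by nra. lra.
  - assert (x * t ^ 2 >= x * y' ^ 2 - 2 * (x * y') * E) by nra. nra.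
Qed.

Lemma inv_sqrt_newton_error x y0 b s :
  0 < x <= 2 -> 0 < y0 -> /4 <= x * y0 ^ 2 <= 1 ->
  (/2)^b <= /1000000 -> (2 <= s)%nat -> (b <= 2 ^ s)%nat ->
  0 < yiter x y0 b s /\
  0 <= 1 - x * yiter x y0 b s ^ 2 <= sqrt ((/2)^b) + 9 * (/2)^b.
Proof.
  intros Hx Hy0 Hxy HE Hs Hb.
  set (E := (/2)^b) in *.
  assert (HE0 : 0 < E) by (apply pow_lt; lra).
  set (d j := 1 - x * yiter x y0 b j ^ 2).
  assert (Hstep : forall j, 0 < yiter x y0 b j /\ 0 <= d j <= 3/4 ->
    0 < yiter x y0 b (S j) /\ 0 <= d (S j) <= 3/4 * d j ^ 2 + d j ^ 3 / 4 + 3 * E).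
  { intros j [Hy Hd]. exact (inv_sqrt_newton_step x _ b Hx Hy ltac:(fold E; lra) Hd). }
  assert (Hinv : forall j, 0 < yiter x y0 b j /\ 0 <= d j <= 3/4).
  { induction j as [|j IH]; [unfold d; simpl; lra|].
    destruct IH as [Hy Hd]. destruct (Hstep j (conj Hy Hd)) as [Hy' Hd'].
    assert (d j ^ 2 <= 9/16) by nra. assert (d j ^ 3 <= 27/64) by nra. lra. }
  assert (Hsq : forall j, d (S j) <= d j ^ 2 + 3 * E).
  { intros j. destruct (Hinv j) as [_ Hd]. pose proof (proj2 (Hstep j (Hinv j))). nra. }
  (* two explicit steps bring the residual from 3/4 below 1/4 *)
  assert (Hd1 : d 1%nat <= 5275/10000).
  { destruct (Hinv 0%nat) as [_ Hd]. pose proof (proj2 (Hstep 0%nat (Hinv 0%nat))).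
    assert (d 0%nat ^ 2 <= 9/16) by nra. assert (d 0%nat ^ 3 <= 27/64) by nra. lra. }
  assert (Hd2 : d 2%nat <= /4 + 3 * (3 * E)).
  { destruct (Hinv 1%nat) as [_ Hd]. pose proof (proj2 (Hstep 1%nat (Hinv 1%nat))).
    assert (d 1%nat ^ 2 <= 27826/100000) by nra.
    assert (d 1%nat ^ 3 <= 14680/100000) by nra. lra. }
  pose proof (squaring_error_bound (fun j => d (2 + j)%nat) (/4) (3 * E)
    ltac:(lra) ltac:(lra) (fun j => proj1 (proj2 (Hinv (2 + j)%nat)))
    (fun j => Hsq (2 + j)%nat) Hd2 (s - 2)) as Hds.
  cbv beta in Hds. rewrite quarter_pow_pow2 in Hds.
  replace (2 + (s - 2))%nat with s in Hds by lia.
  set (A := (/2) ^ (2 ^ S (s - 2))) in *.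
  assert (HA0 : 0 <= A) by (apply pow_le; lra).
  assert (HA : A ^ 2 <= E).
  { unfold A. rewrite <- pow_mult. apply half_pow_le.
    replace s with (S (S (s - 2))) in Hb by lia.
    rewrite !Nat.pow_succ_r' in Hb. rewrite Nat.pow_succ_r'. lia. }
  assert (A <= sqrt E) by (rewrite <- (sqrt_pow2 A HA0); apply sqrt_le_1_alt, HA).
  destruct (Hinv s) as [Hy Hd]. split; [exact Hy | unfold d in Hd, Hds; lra].
Qed.

Lemma sqrt_rel_error_of_residuals w x y rho :
  0 < w -> 0 < y -> 0 <= rho <= /100 ->
  0 <= 1 - w * x <= rho / 2 -> 0 <= 1 - x * y ^ 2 <= rho ->
  sqrt w * (1 - rho) <= y <= sqrt w * (1 + rho).
Proof.
  intros Hw Hy Hrho He Hd.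
  set (e := 1 - w * x) in *. set (d := 1 - x * y ^ 2) in *.
  assert (Hsw : 0 <= sqrt w) by apply sqrt_pos.
  assert (Hsw2 : sqrt w ^ 2 = w) by (apply pow2_sqrt; lra).
  assert (Hid : y ^ 2 * (1 - e) = w * (1 - d)) by (unfold d, e; ring).
  assert (Hup : y ^ 2 <= (sqrt w * (1 + rho)) ^ 2).
  { rewrite Rpow_mult_distr, Hsw2.
    assert (Hgrow : (1 + rho) ^ 2 * (1 - e) >= 1) by nra.
    apply Rmult_le_reg_r with (1 - e); [lra|]. nra. }
  assert (Hlow : (sqrt w * (1 - rho)) ^ 2 <= y ^ 2).
  { rewrite Rpow_mult_distr, Hsw2.
    assert (w * (1 - rho) ^ 2 <= w * (1 - d)) by (apply Rmult_le_compat_l; nra).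
    pose proof (pow2_ge_0 y). nra. }
  assert (0 <= sqrt w * (1 - rho)) by nra. assert (0 <= sqrt w * (1 + rho)) by nra.
  split; nra.
Qed.

Lemma sqrt_half_pow_le b : (40 <= b)%nat -> sqrt ((/2)^b) <= /1000000.
Proof.
  intros Hb. rewrite <- (sqrt_pow2 (/1000000)) by lra. apply sqrt_le_1_alt.
  apply Rle_trans with ((/2)^40); [exact (half_pow_le 40 b Hb)|].
  replace ((/1000000) ^ 2) with (/ 1000000000000) by field.
  rewrite pow_inv. apply Rinv_le_contravar; simpl; lra.
Qed.

Lemma SQRT_rel_error w n m b M :
  /2 <= w <= M -> (40 <= b)%nat -> M * sqrt ((/2)^b) <= /100 ->
  sqrt w * (1 - 3 * sqrt ((/2)^b)) <= SQRT w n m b <= sqrt w * (1 + 3 * sqrt ((/2)^b)).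
Proof.
  intros Hw Hb HM.
  set (E := (/2)^b) in *. set (sE := sqrt E) in *.
  assert (HE : 0 < E) by (apply pow_lt; lra).
  assert (HsE2 : sE * sE = E) by (apply sqrt_sqrt; lra).
  assert (HsE0 : 0 <= sE) by apply sqrt_pos.
  assert (HsE : sE <= /1000000) by exact (sqrt_half_pow_le b Hb).
  assert (HE40 : E <= /1000000000000) by nra.
  assert (HME : M * E <= sE / 100) by (rewrite <- HsE2; nra).
  unfold SQRT. destruct (Req_EM_T w 1) as [->|Hw1].
  { rewrite sqrt_1. lra. }
  cbv zeta.
  set (s := Nat.log2_up b).
  assert (Hbs : (b <= 2 ^ s)%nat) by (apply Nat.log2_up_le_pow2; lia).
  assert (Hs : (2 <= s)%nat).
  { destruct (Nat.le_gt_cases 2 s) as [|Hs]; [assumption|].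
    assert (Hle : (s <= 1)%nat) by lia. apply Nat.log2_up_le_pow2 in Hle; simpl in Hle; lia. }
  destruct (reciprocal_newton_error w (powerRZ 2 (- (ilog2 w + 1))) b s M ltac:(lra)
    ltac:(fold E; nra) (reciprocal_seed w ltac:(lra)) ltac:(lia) Hbs) as [He0 He].
  set (xs := xiter w (powerRZ 2 (- (ilog2 w + 1))) b s) in *. fold E in He.
  assert (Hxs : 0 < xs <= 2) by (split; nra).
  destruct (inv_sqrt_newton_error xs (powerRZ 2 ((- ilog2 xs - 1) / 2)) b s Hxs
    ltac:(apply powerRZ_lt; lra)
    (inv_sqrt_seed xs (proj1 Hxs)) ltac:(fold E; lra) Hs Hbs) as [Hy Hd].
  fold E sE in Hd.
  assert (E <= sE / 1000000) by nra.
  apply (sqrt_rel_error_of_residuals w xs); lra.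
Qed.

Definition dyadic_root (w : R) (i : nat) : R := Rpower w (/ 2 ^ i).

Lemma dyadic_root_1 w : 0 < w -> dyadic_root w 1 = sqrt w.
Proof. intros Hw. unfold dyadic_root. simpl. rewrite Rmult_1_r. apply Rpower_sqrt, Hw. Qed.

Lemma dyadic_root_S w i : 0 < w -> dyadic_root w (S i) = sqrt (dyadic_root w i).
Proof.
  intros Hw. unfold dyadic_root. rewrite <- Rpower_sqrt by apply exp_pos.
  rewrite Rpower_mult. f_equal. simpl. field. apply pow_nonzero. lra.
Qed.

Lemma dyadic_root_bounds w i : 1 <= w -> (1 <= i)%nat -> 1 <= dyadic_root w i <= sqrt w.
Proof.
  intros Hw Hi. unfold dyadic_root.
  pose proof (two_le_pow2 i Hi).
  split.
  - rewrite <- (Rpower_O w) by lra. apply Rle_Rpower; [lra|].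
    left. apply Rinv_0_lt_compat. lra.
  - rewrite <- Rpower_sqrt by lra. apply Rle_Rpower; [lra|]. apply Rinv_le_contravar; lra.
Qed.

Lemma sqrt_rel_error_compose t z y r :
  0 <= t -> 0 <= r <= /100 ->
  t * (1 - 3 * r) <= z <= t * (1 + 3 * r) ->
  sqrt z * (1 - r) <= y <= sqrt z * (1 + r) ->
  sqrt t * (1 - 3 * r) <= y <= sqrt t * (1 + 3 * r).
Proof.
  intros Ht Hr [Hzlo Hzhi] [Hylo Hyhi].
  assert (Hst : 0 <= sqrt t) by apply sqrt_pos.
  assert (Hup : sqrt z <= sqrt t * (1 + 3/2 * r)).
  { apply Rle_trans with (sqrt (t * (1 + 3/2 * r) ^ 2)).
    - apply sqrt_le_1_alt. nra.
    - rewrite sqrt_mult, sqrt_pow2 by nra. lra. }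
  assert (Hlow : sqrt t * (1 - 8/5 * r) <= sqrt z).
  { apply Rle_trans with (sqrt (t * (1 - 8/5 * r) ^ 2)).
    - rewrite sqrt_mult, sqrt_pow2 by nra. lra.
    - apply sqrt_le_1_alt. nra. }
  split; nra.
Qed.

Lemma PowerOf2Root_rel_error w n m b M rho :
  1 < w < M -> 2 <= M -> 0 <= rho <= /100 ->
  (forall x n', /2 <= x <= M ->
     sqrt x * (1 - rho) <= SQRT x n' m b <= sqrt x * (1 + rho)) ->
  forall i, (1 <= i)%nat ->
  dyadic_root w i * (1 - 3 * rho) <= PowerOf2Root w i n m b
    <= dyadic_root w i * (1 + 3 * rho).
Proof.
  intros Hw HM Hrho HSQRT i Hi.
  assert (Hsqrt : sqrt w * (1 + 3 * rho) <= M).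
  { assert (sqrt w < sqrt M) by (apply sqrt_lt_1_alt; lra).
    assert (sqrt M * sqrt M = M) by (apply sqrt_sqrt; lra).
    assert (sqrt 2 <= sqrt M) by (apply sqrt_le_1_alt; lra).
    assert (1.1 <= sqrt 2) by (rewrite <- (sqrt_pow2 1.1) by lra; apply sqrt_le_1_alt; lra).
    pose proof (sqrt_pos w). nra. }
  destruct i as [|k]; [lia|]. clear Hi.
  induction k as [|k IH].
  - cbn [PowerOf2Root]. rewrite dyadic_root_1 by lra.
    destruct (HSQRT w n ltac:(lra)). pose proof (sqrt_pos w). nra.
  - change (PowerOf2Root w (S (S k)) n m b) with (SQRT (PowerOf2Root w (S k) n m b) (m + b) m b).
    rewrite dyadic_root_S by lra.
    destruct (dyadic_root_bounds w (S k) ltac:(lra) ltac:(lia)).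
    apply (sqrt_rel_error_compose _ (PowerOf2Root w (S k) n m b)); [lra | lra | exact IH |].
    apply HSQRT. nra.
Qed.

Lemma fracsum_S fb k :
  fracsum fb (S k) = fracsum fb k + (if fb (S k) then / 2 ^ S k else 0).
Proof. cbn [fracsum]. rewrite powerRZ_neg', <- pow_powerRZ. reflexivity. Qed.

Lemma fracsum_range fb k : 0 <= fracsum fb k <= 1 - / 2 ^ k.
Proof.
  induction k as [|k IH]; [simpl; lra|].
  rewrite fracsum_S.
  assert (Hhalf : / 2 ^ S k = / 2 ^ k / 2) by (simpl; field; apply pow_nonzero; lra).
  assert (0 < / 2 ^ k) by (apply Rinv_0_lt_compat, pow_lt; lra).
  destruct (fb (S k)); lra.
Qed.

Lemma Rpower_fracsum_bounds w fb k : 1 <= w -> 1 <= Rpower w (fracsum fb k) <= w.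
Proof.
  intros Hw. destruct (fracsum_range fb k) as [H0 H1].
  pose proof (Rinv_0_lt_compat _ (pow_lt 2 k ltac:(lra))).
  split.
  - rewrite <- (Rpower_O w) by lra. apply Rle_Rpower; lra.
  - rewrite <- (Rpower_1 w) at 2 by lra. apply Rle_Rpower; lra.
Qed.

Lemma trunc_mul_rel_error P t Z z b c r :
  1 <= P -> 1 <= t -> 0 <= c -> (/2)^b <= r -> c + 2 * r <= 1 ->
  P * (1 - c) <= Z <= P * (1 + c) -> t * (1 - r) <= z <= t * (1 + r) ->
  P * t * (1 - (c + 2 * r)) <= trunc b (Z * z) <= P * t * (1 + (c + 2 * r)).
Proof.
  intros HP Ht Hc Hr Hcr [HZlo HZhi] [Hzlo Hzhi].
  destruct (trunc_bounds b (Z * z)) as [Hlo Hhi].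
  assert (0 <= (/2)^b) by (apply pow_le; lra).
  assert (HZ0 : 0 <= P * (1 - c)) by nra.
  assert (Hz0 : 0 <= t * (1 - r)) by nra.
  assert (Hup : Z * z <= P * (1 + c) * (t * (1 + r))) by (apply Rmult_le_compat; lra).
  assert (Hlow : P * (1 - c) * (t * (1 - r)) <= Z * z) by (apply Rmult_le_compat; lra).
  (* the truncation error is absorbed by one extra [r], since [P t >= 1] *)
  assert ((/2)^b <= P * t * r) by nra.
  split; nra.
Qed.

Lemma prodloop_rel_error w fb n m b r :
  1 < w -> (/2)^b <= r ->
  (forall i, (1 <= i)%nat ->
     dyadic_root w i * (1 - r) <= PowerOf2Root w i n m b <= dyadic_root w i * (1 + r)) ->
  forall k, 2 * INR k * r <= 1 ->
  Rpower w (fracsum fb k) * (1 - 2 * INR k * r) <= prodloop w fb k n m b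
    <= Rpower w (fracsum fb k) * (1 + 2 * INR k * r).
Proof.
  intros Hw Hr Hroots k. induction k as [|k IH]; intros Hk.
  - simpl. rewrite Rpower_O by lra. lra.
  - rewrite S_INR in Hk |- *.
    assert (Hr0 : 0 <= r) by (pose proof (pow_le (/2) b ltac:(lra)); lra).
    specialize (IH ltac:(pose proof (pos_INR k); nra)).
    destruct (Rpower_fracsum_bounds w fb k ltac:(lra)) as [HP _].
    rewrite fracsum_S. cbn [prodloop]. destruct (fb (S k)).
    + rewrite Rpower_plus. fold (dyadic_root w (S k)).
      replace (2 * (INR k + 1) * r) with (2 * INR k * r + 2 * r) by ring.
      apply trunc_mul_rel_error; try lra.
      * apply dyadic_root_bounds; [lra | lia].
      * pose proof (pos_INR k). nra.
      * apply Hroots. lia.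
    + rewrite Rplus_0_r. pose proof (pos_INR k). nra.
Qed.

Lemma IZR_le_Zceil x : x <= IZR (Zceil x).
Proof.
  unfold Zceil. rewrite opp_IZR. change (Zfloor (- x)) with (Int_part (- x)).
  destruct (base_Int_part (- x)). lra.
Qed.

Lemma IZR_le_INR_Z_to_nat z : IZR z <= INR (Z.to_nat z).
Proof.
  destruct (Z_le_gt_dec 0 z).
  - rewrite INR_IZR_INZ, Z2Nat.id by lia. lra.
  - assert (IZR z < 0) by (apply IZR_lt; lia). pose proof (pos_INR (Z.to_nat z)). lra.
Qed.

Lemma FP_b_ge n m nf l :
  40 <= INR (FP_b n m nf l) /\
  5 * (INR l + 2 * INR m + ln (INR nf)) <= INR (FP_b n m nf l).
Proof.
  set (X := 5 * (INR l + 2 * INR m + ln (INR nf))).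
  assert (Hmax : forall a, (a <= Nat.max (Z.to_nat (Zceil X)) 40)%nat ->
    (a <= FP_b n m nf l)%nat).
  { intros a Ha. unfold FP_b. fold X.
    eapply Nat.le_trans; [exact Ha|].
    eapply Nat.le_trans; [|apply Nat.le_max_r]. apply Nat.le_max_r. }
  split.
  - apply Rle_trans with (INR 40); [simpl; lra | apply le_INR, Hmax; lia].
  - apply Rle_trans with (INR (Z.to_nat (Zceil X))); [|apply le_INR, Hmax; lia].
    eapply Rle_trans; [apply IZR_le_Zceil | apply IZR_le_INR_Z_to_nat].
Qed.

Lemma pow2_dominates b m nf l :
  (1 <= m)%nat -> (1 <= nf)%nat -> 40 <= INR b ->
  5 * (INR l + 2 * INR m + ln (INR nf)) <= INR b ->
  10000 * (2 ^ m * INR nf * 2 ^ l) ^ 2 <= 2 ^ b.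
Proof.
  intros Hm Hnf Hb40 Hb.
  pose proof ln_lt_2 as Hln2.
  assert (Hnf1 : 1 <= INR nf) by (apply (le_INR 1); exact Hnf).
  assert (Hm1 : 1 <= INR m) by (apply (le_INR 1); exact Hm).
  assert (Hlnf : 0 <= ln (INR nf)).
  { destruct (Rle_lt_dec 0 (ln (INR nf))) as [|Hneg]; [assumption|].
    rewrite <- ln_1 in Hneg. apply ln_lt_inv in Hneg; lra. }
  set (X := 2 ^ m * INR nf * 2 ^ l).
  assert (HX : 0 < X).
  { pose proof (pow_lt 2 m ltac:(lra)). pose proof (pow_lt 2 l ltac:(lra)).
    unfold X. apply Rmult_lt_0_compat; [apply Rmult_lt_0_compat|]; lra. }
  assert (Hln10000 : ln 10000 <= ln (2 ^ 14)).
  { destruct (Rle_lt_dec (ln 10000) (ln (2 ^ 14))) as [|Hgt]; [assumption|].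
    apply ln_lt_inv in Hgt; simpl in Hgt; lra. }
  rewrite ln_pow in Hln10000 by lra.
  assert (HlnX : ln (10000 * X ^ 2) =
    ln 10000 + 2 * (INR m * ln 2 + ln (INR nf) + INR l * ln 2)).
  { pose proof (pow_lt 2 m ltac:(lra)). pose proof (pow_lt 2 l ltac:(lra)).
    rewrite ln_mult, ln_pow by (try apply pow_lt; lra). unfold X.
    rewrite !ln_mult, !ln_pow by (try apply Rmult_lt_0_compat; lra).
    simpl (INR 2). ring. }
  (* a fifth of [b] and the surplus [6 m >= 6] bits give the [14 >= log2 10000] bits,
     and [ln 2 >= 1/2] turns [4 ln nf] bits into the factor [nf ^ 2] *)
  assert (Hlog : ln (10000 * X ^ 2) <= INR b * ln 2).
  { rewrite HlnX. simpl (INR 14) in Hln10000.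
    assert ((INR b - 40) * ln 2 >= 0) by nra.
    assert ((INR b - 5 * (INR l + 2 * INR m + ln (INR nf))) * ln 2 >= 0) by nra.
    assert ((ln 2 - /2) * ln (INR nf) >= 0) by nra.
    assert ((INR m - 1) * ln 2 >= 0) by nra.
    assert (INR l * ln 2 >= 0) by (pose proof (pos_INR l); nra).
    lra. }
  rewrite <- ln_pow in Hlog by lra.
  destruct (Rle_lt_dec (10000 * X ^ 2) (2 ^ b)) as [|Hgt]; [assumption|].
  apply ln_increasing in Hgt; [lra | apply pow_lt; lra].
Qed.

Lemma FP_b_precision n m nf l : (1 <= m)%nat -> (1 <= nf)%nat ->
  100 * (2 ^ m * INR nf * 2 ^ l) * sqrt ((/2) ^ FP_b n m nf l) <= 1.
Proof.
  intros Hm Hnf. set (b := FP_b n m nf l). set (X := 2 ^ m * INR nf * 2 ^ l).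
  destruct (FP_b_ge n m nf l) as [Hb40 Hb]. fold b in Hb40, Hb.
  pose proof (pow2_dominates b m nf l Hm Hnf Hb40 Hb) as Hdom. fold X in Hdom.
  assert (HX : 0 <= X).
  { unfold X. pose proof (pow_le 2 m ltac:(lra)). pose proof (pow_le 2 l ltac:(lra)).
    pose proof (pos_INR nf). apply Rmult_le_pos; [apply Rmult_le_pos|]; lra. }
  assert (Hp : 0 < 2 ^ b) by (apply pow_lt; lra).
  rewrite <- (sqrt_pow2 (100 * X)), <- sqrt_mult by (try apply pow_le; lra).
  rewrite <- sqrt_1. apply sqrt_le_1_alt.
  rewrite pow_inv. apply Rmult_le_reg_r with (2 ^ b); [exact Hp|].
  rewrite Rmult_assoc, Rinv_l by lra. lra.
Qed.

Lemma bitsum_le bits lo len :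
  bitsum bits lo len <= powerRZ 2 (lo + Z.of_nat len) - powerRZ 2 lo.
Proof.
  induction len as [|k IH].
  - simpl. rewrite Z.add_0_r. lra.
  - cbn [bitsum]. rewrite Nat2Z.inj_succ, <- Z.add_1_r, Z.add_assoc.
    rewrite (powerRZ_add 2 (lo + Z.of_nat k) 1) by lra. simpl (powerRZ 2 1).
    assert (0 < powerRZ 2 (lo + Z.of_nat k)) by (apply powerRZ_lt; lra).
    destruct (bits k); lra.
Qed.

Lemma prodloop_FP_b_error w fb n m nf l :
  1 < w < 2 ^ m -> (1 <= nf)%nat ->
  Rabs (prodloop w fb nf n m (FP_b n m nf l) - Rpower w (fracsum fb nf)) <= (/2) ^ l.
Proof.
  intros Hw Hnf.
  assert (Hm : (1 <= m)%nat) by (destruct m; [simpl in Hw; lra | lia]).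
  set (M := 2 ^ m) in *. set (b := FP_b n m nf l).
  set (sE := sqrt ((/2) ^ b)).
  pose proof (FP_b_precision n m nf l Hm Hnf) as Hprec. fold M b sE in Hprec.
  destruct (FP_b_ge n m nf l) as [Hb40 _]. fold b in Hb40.
  assert (Hb : (40 <= b)%nat) by (apply INR_le; simpl; lra).
  pose proof (two_le_pow2 m Hm) as HM. fold M in HM.
  assert (Hnf1 : 1 <= INR nf) by (apply (le_INR 1), Hnf).
  assert (Hl : 2 ^ l * (/2) ^ l = 1) by (rewrite <- Rpow_mult_distr, Rinv_r, pow1; lra).
  assert (H2l : 1 <= 2 ^ l) by (apply pow_R1_Rle; lra).
  assert (HsE0 : 0 <= sE) by apply sqrt_pos.
  assert (HsE2 : sE * sE = (/2) ^ b) by (apply sqrt_sqrt, pow_le; lra).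
  assert (HMsE : M * sE <= /100).
  { assert (1 <= INR nf * 2 ^ l) by nra. assert (0 <= M * sE) by nra.
    assert ((INR nf * 2 ^ l - 1) * (M * sE) >= 0) by nra. nra. }
  assert (HnfsE : INR nf * sE <= /200).
  { assert (0 <= INR nf * sE) by nra. assert (2 <= M * 2 ^ l) by nra.
    assert ((M * 2 ^ l - 2) * (INR nf * sE) >= 0) by nra. nra. }
  assert (HsE : sE <= /1000000) by exact (sqrt_half_pow_le b Hb).
  assert (Hrho : 0 <= 3 * sE <= /100) by lra.
  pose proof (PowerOf2Root_rel_error w n m b M (3 * sE) Hw HM Hrho
    (fun x n' Hx => SQRT_rel_error x n' m b M Hx Hb HMsE)) as Hroots.
  replace (3 * (3 * sE)) with (9 * sE) in Hroots by ring.
  destruct (prodloop_rel_error w fb n m b (9 * sE) ltac:(lra) ltac:(nra) Hroots nf ltac:(nra))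
    as [Hlo Hhi].
  set (P := Rpower w (fracsum fb nf)) in *.
  pose proof (Rpower_fracsum_bounds w fb nf ltac:(lra)) as HP. fold P in HP.
  assert (Herr : 2 * INR nf * (9 * sE) * P <= 18/100 * (/2) ^ l).
  { assert (0 <= INR nf * sE) by nra.
    apply Rle_trans with (18 * (INR nf * sE * M) * (2 ^ l * (/2) ^ l)); [rewrite Hl; nra|].
    assert (Hpow : 0 < (/2) ^ l) by (apply pow_lt; lra). nra. }
  apply Rabs_le. split; nra.
Qed.

Theorem theorem4 (n m nf l : nat) (w : R) (wbits : nat -> bool)
  (f : R) (fbits : nat -> bool) :
  1 < w ->
  w = bitsum wbits (Z.of_nat m - Z.of_nat n)%Z n ->
  ((f = fracsum fbits nf /\ 0 <= f <= 1) \/ f = 1) ->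
  Rabs (FractionalPower w f fbits n m nf l - Rpower w f)
    <= powerRZ (/ 2) (Z.of_nat l - 1)%Z.
Proof.
  intros Hw1 Hw Hf.
  replace (powerRZ (/2) (Z.of_nat l - 1)) with (2 * (/2) ^ l)
    by (unfold Z.sub; rewrite powerRZ_add, <- pow_powerRZ by lra; simpl; field).
  assert (Hpos : 0 < (/2) ^ l) by (apply pow_lt; lra).
  unfold FractionalPower.
  destruct (Req_EM_T f 1) as [->|Hf1].
  { rewrite Rpower_1, Rminus_diag, Rabs_R0 by lra. lra. }
  destruct (Req_EM_T f 0) as [->|Hf0].
  { rewrite Rpower_O, Rminus_diag, Rabs_R0 by lra. lra. }
  destruct Hf as [[-> _] | ->]; [|contradiction].
  assert (Hnf : (1 <= nf)%nat) by (destruct nf; [simpl in Hf0; contradiction | lia]).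
  assert (Hw2m : w < 2 ^ m).
  { pose proof (bitsum_le wbits (Z.of_nat m - Z.of_nat n) n) as Hle.
    rewrite Z.sub_add, <- pow_powerRZ, <- Hw in Hle.
    pose proof (powerRZ_lt 2 (Z.of_nat m - Z.of_nat n) ltac:(lra)). lra. }
  pose proof (prodloop_FP_b_error w fbits n m nf l (conj Hw1 Hw2m) Hnf). lra.
Qed.
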